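(* Let $x,\tilde x\in(-1,0)$ and $y\in(x,-x)$. Set $\Delta t=p_{1,-1}(\tilde x)-p_{1,-1}(x)$ and $\Delta\theta=p_{0,-1}(\tilde x)-p_{0,-1}(x)$. Then $$p_{\tilde x,-\tilde x}\Big(p_{\tilde x,1}^{-1}\big(p_{x,1}(y)+\Delta\theta\big)\Big)-p_{x,-x}(y)=\Delta t.$$
   Context: For real $p\neq q$ and $w$ strictly between $p$ and $q$ (oriented interval $(p,q)$, $p>q$ allowed), $p_{p,q}(w)=\ln\frac{w-p}{q-w}$, a bijection onto $\mathbb{R}$ with inverse $p_{p,q}^{-1}$. *)

From Stdlib Require Import Reals.
Open Scope R_scope.

(* p_{p,q}(w) = ln((w - p)/(q - w)), meaningful for w strictly between p and q
   (oriented interval, p > q allowed). *)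
Definition pmap (p q w : R) : R := ln ((w - p) / (q - w)).

(* Its inverse R -> (p,q): solving ln((w-p)/(q-w)) = s gives
   w = (p + e^s q) / (1 + e^s). *)
Definition pmap_inv (p q s : R) : R := (p + exp s * q) / (1 + exp s).

(* Exponentiating turns [pmap] into the ratio [(w - p)/(q - w)] and the shift
   by [Δθ] into multiplication by a ratio of such ratios.  Composing [pmap]
   with [pmap_inv] is a Möbius transformation of [exp s], so both sides of the
   claim become logarithms of rational functions of [x], [xt], [y], and the
   theorem reduces to a rational identity in which the factor [x + y]
   appearing after the substitution cancels. *)
From Stdlib Require Import Reals Lra Psatz.
Open Scope R_scope.

Lemma ln_div a b : 0 < a -> 0 < b -> ln (a / b) = ln a - ln b.
Proof.
  intros Ha Hb; unfold Rdiv.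
  rewrite ln_mult, ln_Rinv; [ring | assumption | assumption | now apply Rinv_0_lt_compat].
Qed.

Lemma exp_minus a b : exp (a - b) = exp a / exp b.
Proof. unfold Rminus, Rdiv; now rewrite exp_plus, exp_Ropp. Qed.

Lemma pmap_ratio_pos p q w : p < w < q \/ q < w < p -> 0 < (w - p) / (q - w).
Proof.
  intros [[Hpw Hwq] | [Hqw Hwp]].
  - apply Rdiv_lt_0_compat; lra.
  - replace ((w - p) / (q - w)) with ((p - w) / (w - q)) by (field; lra).
    apply Rdiv_lt_0_compat; lra.
Qed.

Lemma exp_pmap p q w :
  p < w < q \/ q < w < p -> exp (pmap p q w) = (w - p) / (q - w).
Proof. intros Hw; apply exp_ln, pmap_ratio_pos, Hw. Qed.

(* No side condition: when the denominator vanishes, both sides are [_ / 0 = 0]. *)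
Lemma pmap_pmap_inv a b p q s :
  pmap a b (pmap_inv p q s)
  = ln (((p - a) + exp s * (q - a)) / ((b - p) + exp s * (b - q))).
Proof.
  unfold pmap, pmap_inv; f_equal.
  assert (He : 0 < exp s) by apply exp_pos.
  destruct (Req_dec ((b - p) + exp s * (b - q)) 0) as [Hden | Hden].
  - rewrite Hden, Rdiv_0_r.
    replace (b - (p + exp s * q) / (1 + exp s))
      with (((b - p) + exp s * (b - q)) / (1 + exp s)) by (field; lra).
    now rewrite Hden, Rdiv_0_l, Rdiv_0_r.
  - field; lra.
Qed.

Lemma ln_mult_div a b c :
  0 < a -> 0 < b -> 0 < c -> ln (a * b / c) = ln a + ln b - ln c.
Proof.
  intros Ha Hb Hc.
  rewrite ln_div, ln_mult; [reflexivity | assumption | assumption | nra | assumption].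
Qed.

Theorem proposition2p4 (x xt y : R) :
  -1 < x < 0 -> -1 < xt < 0 -> x < y < - x ->
  let dt := pmap 1 (-1) xt - pmap 1 (-1) x in
  let dth := pmap 0 (-1) xt - pmap 0 (-1) x in
  pmap xt (- xt) (pmap_inv xt 1 (pmap x 1 y + dth)) - pmap x (- x) y = dt.
Proof.
  intros Hx Hxt Hy dt dth.
  assert (Hshift : exp (pmap x 1 y + dth)
    = (y - x) / (1 - y) * ((xt - 0) / (-1 - xt) / ((x - 0) / (-1 - x)))).
  { unfold dth; rewrite exp_plus, exp_minus, !exp_pmap; [reflexivity | lra ..]. }
  assert (Hratio :
    ((xt - xt) + exp (pmap x 1 y + dth) * (1 - xt))
      / ((- xt - xt) + exp (pmap x 1 y + dth) * (- xt - 1))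
    = (y - x) / (- x - y) * ((xt - 1) / (-1 - xt)) / ((x - 1) / (-1 - x))).
  { rewrite Hshift; field; repeat split; try lra.
    (* the factor [x + y] of the denominator, nonzero since [y < - x] *)
    replace (_ + _) with (xt * (1 + xt) * (x + y) * (1 - x)) by ring.
    repeat apply Rmult_integral_contrapositive_currified; lra. }
  rewrite pmap_pmap_inv, Hratio, ln_mult_div by (apply pmap_ratio_pos; lra).
  unfold dt, pmap; ring.
Qed.
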